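(* Let $H_0,H_1$ be complex Hilbert spaces, $G$ a densely defined closed operator from $H_0$ into $H_1$ and $D$ a densely defined closed operator from $H_1$ into $H_0$ with $-G^*\subset D$. Let $m\in\mathcal L(H_0)$ (not necessarily coercive), $a\in\mathcal L(H_1)$ coercive, $H$ a Hilbert space and $\kappa\in\mathcal L(\mathrm{BD}(G),H)$ injective with dense range. Define $j=\kappa\circ\pi_{\mathrm{BD}(G)}\colon\mathrm{dom}(G)\to H$ and $\mathfrak b(u,v)=(aGu,Gv)_{H_1}+(mu,v)_{H_0}$ for $u,v\in\mathrm{dom}(G)$. Then the Dirichlet-to-Neumann graph $\Lambda_H$ in $H$ associated with $-DaG+m$ satisfies \[ \Lambda_H=\{(\varphi,\psi)\in H\times H:\exists u\in\mathrm{dom}(G)\text{ with }j(u)=\varphi\text{ and }\mathfrak b(u,v)=(\psi,j(v))_H\text{ for all }v\in\mathrm{dom}(G)\}. \]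
   Context: $\mathring D=-G^*$, $\mathring G=-D^*$. Domains carry graph inner products. $\mathrm{BD}(G)$ (resp. $\mathrm{BD}(D)$) is the orthogonal complement of $\mathrm{dom}(\mathring G)$ in $\mathrm{dom}(G)$ (resp. of $\mathrm{dom}(\mathring D)$ in $\mathrm{dom}(D)$) with induced inner products; $\pi_{\mathrm{BD}(G)},\pi_{\mathrm{BD}(D)}$ the orthogonal projections. $G$ maps $\mathrm{BD}(G)$ into $\mathrm{BD}(D)$. Coercive: $\mathrm{Re}(ax,x)\ge\mu\|x\|^2$ for some $\mu>0$. The Dirichlet-to-Neumann graph is $\Lambda=\{(\pi_{\mathrm{BD}(G)}u,\pi_{\mathrm{BD}(D)}aGu): u\in\mathrm{dom}(G),\ aGu\in\mathrm{dom}(D),\ mu-DaGu=0\}$, and $\Lambda_H=\{(\varphi,\psi)\in H\times H:\exists u_0\in\mathrm{BD}(G),\ \kappa(u_0)=\varphi,\ (u_0,G\kappa^*\psi)\in\Lambda\}$ with $\kappa^*\colon H\to\mathrm{BD}(G)$ the adjoint of $\kappa$. *)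

From HB Require Import structures.
From mathcomp Require Import all_boot all_order all_algebra.
From mathcomp Require Import reals complex.
From Stdlib Require Import ClassicalEpsilon.

Set Implicit Arguments.
Unset Strict Implicit.
Unset Printing Implicit Defensive.

Import Order.TTheory GRing.Theory Num.Theory.
Local Open Scope ring_scope.

Section Hilbert.
Variable R : realType.
Local Notation C := (R[i]).

Section OneSpace.
Variable V : lmodType C.
Variable ip : V -> V -> C.

Definition ipnorm (x : V) : R := Num.sqrt (complex.Re (ip x x)).

Definition hilbert_ip : Prop :=
  [/\ (forall (a : C) (x y z : V), ip (a *: x + y) z = a * ip x z + ip y z),
      (forall x y : V, ip y x = conjc (ip x y)),
      (forall x : V, 0 <= ip x x),
      (forall x : V, ip x x = 0 -> x = 0)
    & (forall u : nat -> V,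
        (forall e : R, 0 < e -> exists N : nat, forall n m : nat,
           (N <= n)%N -> (N <= m)%N -> ipnorm (u n - u m) < e) ->
        exists l : V, forall e : R, 0 < e -> exists N : nat, forall n : nat,
           (N <= n)%N -> ipnorm (u n - l) < e)].

Definition subspace (S : V -> Prop) : Prop :=
  S 0 /\ forall (a : C) (x y : V), S x -> S y -> S (a *: x + y).

Definition dense (S : V -> Prop) : Prop :=
  forall (x : V) (e : R), 0 < e -> exists y, S y /\ ipnorm (x - y) < e.

Definition bounded_op (f : {linear V -> V}) : Prop :=
  exists c : R, forall x, ipnorm (f x) <= c * ipnorm x.

Definition coercive (f : V -> V) : Prop :=
  exists mu : R, 0 < mu /\ forall x, mu * ipnorm x ^+ 2 <= complex.Re (ip (f x) x).

Definition is_orth_proj (gip : V -> V -> C) (S : V -> Prop) (u w : V) : Prop :=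
  S w /\ forall z, S z -> gip (u - w) z = 0.

Definition orth_proj (gip : V -> V -> C) (S : V -> Prop) (u : V) : V :=
  epsilon (inhabits (0 : V)) (is_orth_proj gip S u).
End OneSpace.

Record op (V W : lmodType C) : Type := Op {
  dom : V -> Prop;
  app : V -> W }.

Section Operators.
Variables (V W : lmodType C) (ipV : V -> V -> C) (ipW : W -> W -> C).

Definition dd_closed (A : op V W) : Prop :=
  [/\ subspace (dom A),
      (forall (a : C) x y, dom A x -> dom A y ->
          app A (a *: x + y) = a *: app A x + app A y),
      dense ipV (dom A)
    & (forall (x : V) (y : W),
        (forall e : R, 0 < e -> exists z, dom A z /\
            ipnorm ipV (x - z) + ipnorm ipW (y - app A z) < e) ->
        dom A x /\ app A x = y)].

Definition adj_graph (A : op V W) (y : W) (z : V) : Prop :=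
  forall x, dom A x -> ipW (app A x) y = ipV x z.

Definition neg_adj_sub (A : op V W) (B : op W V) : Prop :=
  forall y z, adj_graph A y z -> dom B y /\ app B y = - z.

Definition dom_neg_adj (A : op V W) (y : W) : Prop := exists z, adj_graph A y z.

Definition graph_ip (A : op V W) (x y : V) : C := ipV x y + ipW (app A x) (app A y).

(* boundary space BD(A) := orthogonal complement, in dom A with the graph inner
   product, of the domain Adom of the "ring" operator *)
Definition BD (A : op V W) (Adom : V -> Prop) (x : V) : Prop :=
  dom A x /\ forall y, Adom y -> graph_ip A x y = 0.
End Operators.

Section DtN.
Variables (H0 H1 H : lmodType C)
  (ip0 : H0 -> H0 -> C) (ip1 : H1 -> H1 -> C) (ipH : H -> H -> C)
  (G : op H0 H1) (D : op H1 H0).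

(* dom(G-ring) = dom(-D adjoint),  dom(D-ring) = dom(-G adjoint) *)
Definition BDG : H0 -> Prop := BD ip0 ip1 G (dom_neg_adj ip1 ip0 D).
Definition BDD : H1 -> Prop := BD ip1 ip0 D (dom_neg_adj ip0 ip1 G).
Definition projG : H0 -> H0 := orth_proj (graph_ip ip0 ip1 G) BDG.
Definition projD : H1 -> H1 := orth_proj (graph_ip ip1 ip0 D) BDD.

Definition DtN_graph (a : H1 -> H1) (m : H0 -> H0) (u0 : H0) (f0 : H1) : Prop :=
  exists u, [/\ dom G u, dom D (a (app G u)),
              m u - app D (a (app G u)) = 0,
              projG u = u0 & projD (a (app G u)) = f0].

Definition bounded_on_BDG (kappa : H0 -> H) : Prop :=
  (forall (c : C) x y, BDG x -> BDG y -> kappa (c *: x + y) = c *: kappa x + kappa y) /\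
  exists c : R, forall x, BDG x -> ipnorm ipH (kappa x) <= c * ipnorm (graph_ip ip0 ip1 G) x.

Definition kappa_adj (kappa : H0 -> H) (psi : H) : H0 :=
  epsilon (inhabits (0 : H0))
    (fun w => BDG w /\ forall u, BDG u -> ipH (kappa u) psi = graph_ip ip0 ip1 G u w).

Definition DtN_graph_H (a : H1 -> H1) (m : H0 -> H0) (kappa : H0 -> H) (phi psi : H) : Prop :=
  exists u0, [/\ BDG u0, kappa u0 = phi & DtN_graph a m u0 (app G (kappa_adj kappa psi))].
End DtN.
End Hilbert.

(* The graph space [dom G] splits orthogonally (graph inner product) into the
   closed subspace [dom G0], [G0 = - D^*], and its complement [BD(G)];
   likewise [dom D = dom D0 (+) BD(D)]. The form
   [(f, G v) + (D f, v)] vanishes as soon as [f] lies in [dom D0] or [v] in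
   [dom G0], which gives Green's formula
     [(f, G v) + (D f, v) = (pi_D f, G pi_G v)_BD(D)];
   moreover [G : BD(G) -> BD(D)] is unitary with inverse [D], so by the Riesz
   representation of [kappa^*],  [(psi, j v)_H = (G kappa^* psi, G pi_G v)_BD(D)].
   A point of [Lambda_H] thus satisfies the weak equation by Green's formula.
   Conversely, testing the weak equation with [v] in [dom G0], where [j v = 0],
   shows [a G u \in dom (- G0)^* = dom D] with [D a G u = m u]; then
   [pi_D (a G u) = G kappa^* psi] because [G pi_G] maps [dom G] onto [BD(D)]. *)

From mathcomp Require Import all_boot all_order all_algebra.
From mathcomp Require Import boolp classical_sets reals complex.
From mathcomp Require Import ring lra.
From Stdlib Require Import ClassicalEpsilon.

Set Implicit Arguments.
Unset Strict Implicit.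
Unset Printing Implicit Defensive.

Import Order.TTheory GRing.Theory Num.Theory.
Local Open Scope ring_scope.
Local Open Scope complex_scope.

Local Notation Re := complex.Re.
Local Notation Im := complex.Im.

Section ComplexFacts.
Variable R : realType.
Implicit Types (a : R) (z : R[i]).

(* Rewriting with the generic [rmorphD] etc. leaves the morphism coercion in
   place of [conjc], so later rewrites with [ipC] no longer match. *)
Lemma conjcD z w : conjc (z + w) = conjc z + conjc w. Proof. exact: rmorphD. Qed.
Lemma conjcN z : conjc (- z) = - conjc z. Proof. exact: rmorphN. Qed.
Lemma conjcM z w : conjc (z * w) = conjc z * conjc w. Proof. exact: rmorphM. Qed.

Lemma Re_mulCr z a : Re (z * a%:C) = Re z * a.
Proof. by case: z => x y /=; ring. Qed.

Lemma Re_mulCl a z : Re (a%:C * z) = a * Re z.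
Proof. by case: z => x y /=; ring. Qed.

Lemma Re_mulJr z : Re (conjc z * z) = Re z ^+ 2 + Im z ^+ 2.
Proof. by case: z => x y /=; ring. Qed.

Lemma Re_mulJr_gt0 z : z != 0 -> 0 < Re (conjc z * z).
Proof.
case: z => x y nz; rewrite Re_mulJr /=.
have [x0|x0] := eqVneq x 0; last by rewrite ltr_pwDl ?sqr_ge0 ?exprn_even_gt0.
have [y0|y0] := eqVneq y 0; first by rewrite x0 y0 eqxx in nz.
by rewrite ltr_pwDr ?sqr_ge0 ?exprn_even_gt0.
Qed.

Lemma ge0_complexE z : 0 <= z -> z = (Re z)%:C /\ 0 <= Re z.
Proof.
by move=> z0; split; [rewrite RRe_real // ger0_real | move: z0; rewrite lecE => /andP[]].
Qed.

Lemma Re_mulJ_scale a z w : Re (conjc (a%:C * z) * w) = a * Re (conjc z * w).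
Proof. by case: z => x y; case: w => u v /=; ring. Qed.
End ComplexFacts.

Lemma subrBB (V : zmodType) (u x y : V) : (u - x) - (u - y) = y - x.
Proof. by rewrite opprB addrC addrA subrK. Qed.

Section SemiInnerProduct.
Variables (R : realType) (V : lmodType R[i]) (ip : V -> V -> R[i]).

Record semi_ip_on (T : V -> Prop) : Prop := SemiIpOn {
  semi_ip_subspace : subspace T;
  semi_ip_linear : forall a x y z, T x -> T y -> T z ->
    ip (a *: x + y) z = a * ip x z + ip y z;
  semi_ip_hermitian : forall x y, T x -> T y -> ip y x = conjc (ip x y);
  semi_ip_ge0 : forall x, T x -> 0 <= ip x x }.

Definition qf (x : V) : R := Re (ip x x).

Variable T : V -> Prop.

Definition definite_on := forall x, T x -> ip x x = 0 -> x = 0.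

Definition complete_on :=
  forall u : nat -> V, (forall n, T (u n)) ->
  (forall e, 0 < e -> exists N, forall n m, (N <= n)%N -> (N <= m)%N ->
     qf (u n - u m) < e) ->
  exists2 l, T l & forall e, 0 < e -> exists N, forall n, (N <= n)%N ->
     qf (u n - l) < e.

Definition closed_in (S : V -> Prop) :=
  forall x, T x -> (forall e, 0 < e -> exists2 s, S s & qf (x - s) < e) -> S x.

Hypothesis P : semi_ip_on T.

Lemma memT0 : T 0. Proof. by case: (semi_ip_subspace P). Qed.

Lemma memTP a x y : T x -> T y -> T (a *: x + y).
Proof. by case: (semi_ip_subspace P) => _; apply. Qed.

Lemma memTZ a x : T x -> T (a *: x).
Proof. by move=> Tx; rewrite -[_ *: _]addr0; apply: (memTP a Tx memT0). Qed.

Lemma memTD x y : T x -> T y -> T (x + y).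
Proof. by move=> Tx Ty; have := memTP 1 Tx Ty; rewrite scale1r. Qed.

Lemma memTN x : T x -> T (- x).
Proof. by move=> Tx; rewrite -scaleN1r; apply: memTZ. Qed.

Lemma memTB x y : T x -> T y -> T (x - y).
Proof. by move=> Tx Ty; apply: (memTD Tx (memTN Ty)). Qed.

Lemma ip0l z : T z -> ip 0 z = 0.
Proof.
move=> Tz; have := semi_ip_linear P 1 memT0 memT0 Tz.
rewrite scale1r addr0 mul1r => /(congr1 (fun w => w - ip 0 z)).
by rewrite addrK subrr.
Qed.

Lemma ipZl a x z : T x -> T z -> ip (a *: x) z = a * ip x z.
Proof.
by move=> Tx Tz; rewrite -[_ *: _]addr0 (semi_ip_linear P _ Tx memT0 Tz) ip0l // addr0.
Qed.

Lemma ipDl x y z : T x -> T y -> T z -> ip (x + y) z = ip x z + ip y z.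
Proof. by move=> Tx Ty Tz; have := semi_ip_linear P 1 Tx Ty Tz; rewrite scale1r mul1r. Qed.

Lemma ipNl x z : T x -> T z -> ip (- x) z = - ip x z.
Proof. by move=> Tx Tz; rewrite -scaleN1r ipZl // mulN1r. Qed.

Lemma ipBl x y z : T x -> T y -> T z -> ip (x - y) z = ip x z - ip y z.
Proof. by move=> Tx Ty Tz; rewrite (ipDl Tx (memTN Ty) Tz) ipNl. Qed.

Lemma ipC x y : T x -> T y -> ip y x = conjc (ip x y).
Proof. exact: semi_ip_hermitian. Qed.

Lemma ip0r z : T z -> ip z 0 = 0.
Proof. by move=> Tz; rewrite (ipC memT0 Tz) ip0l // conjc0. Qed.

Lemma ipZr a x z : T x -> T z -> ip z (a *: x) = conjc a * ip z x.
Proof. by move=> Tx Tz; rewrite (ipC (memTZ a Tx) Tz) ipZl // conjcM -ipC. Qed.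

Lemma ipDr x y z : T x -> T y -> T z -> ip z (x + y) = ip z x + ip z y.
Proof.
by move=> Tx Ty Tz; rewrite (ipC (memTD Tx Ty) Tz) ipDl // conjcD -!ipC.
Qed.

Lemma ipNr x z : T x -> T z -> ip z (- x) = - ip z x.
Proof. by move=> Tx Tz; rewrite -scaleN1r ipZr // conjcN conjc1 mulN1r. Qed.

Lemma ipBr x y z : T x -> T y -> T z -> ip z (x - y) = ip z x - ip z y.
Proof. by move=> Tx Ty Tz; rewrite (ipDr Tx (memTN Ty) Tz) ipNr. Qed.

Lemma qf_ge0 x : T x -> 0 <= qf x.
Proof. by move=> /(semi_ip_ge0 P) /ge0_complexE []. Qed.

Lemma Re_ipC x y : T x -> T y -> Re (ip y x) = Re (ip x y).
Proof. by move=> Tx Ty; rewrite ipC //; case: (ip x y). Qed.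

Lemma qfZ c x : T x -> qf (c *: x) = Re (conjc c * c) * qf x.
Proof.
move=> Tx; rewrite /qf (ipZl c Tx (memTZ c Tx)) ipZr // mulrA [c * _]mulrC.
by rewrite [ip x x](ge0_complexE (semi_ip_ge0 P Tx)).1 Re_mulCr.
Qed.

Lemma qfD x y : T x -> T y -> qf (x + y) = qf x + qf y + 2 * Re (ip x y).
Proof.
move=> Tx Ty; rewrite /qf (ipDl Tx Ty (memTD Tx Ty)) !ipDr // !raddfD /=.
by rewrite (Re_ipC Tx Ty) -!/(qf _); lra.
Qed.

Lemma qfB x y : T x -> T y -> qf (x - y) = qf x + qf y - 2 * Re (ip x y).
Proof.
move=> Tx Ty; rewrite (qfD Tx (memTN Ty)) ipNr // raddfN /= -scaleN1r qfZ //.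
by rewrite conjcN conjc1 mulN1r opprK mul1r mulrN.
Qed.

Lemma qfBC x y : T x -> T y -> qf (x - y) = qf (y - x).
Proof. by move=> Tx Ty; rewrite !qfB // (Re_ipC Ty Tx) [qf x + _]addrC. Qed.

Lemma qf_parallelogram x y : T x -> T y ->
  qf (x + y) + qf (x - y) = 2 * qf x + 2 * qf y.
Proof. by move=> Tx Ty; rewrite (qfD Tx Ty) (qfB Tx Ty); lra. Qed.

(* Young's inequality [2 Re (x, y) <= d |x|^2 + |y|^2 / d], from [|d x - y|^2 >= 0]. *)
Lemma qfD_le d x y : 0 < d -> T x -> T y ->
  qf (x + y) <= (1 + d) * qf x + (1 + d^-1) * qf y.
Proof.
move=> d0 Tx Ty; have := qf_ge0 (memTB (memTZ d%:C Tx) Ty).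
rewrite (qfB (memTZ d%:C Tx) Ty) qfZ // ipZl // Re_mulCl (qfD Tx Ty).
have -> : Re (conjc d%:C * d%:C) = d ^+ 2 by rewrite /=; ring.
move: (qf x) (qf y) (Re (ip x y)) (qf_ge0 Ty) => X Y Z Y0 H.
have dY : d^-1 * Y * d = Y by rewrite mulrC mulrA divff ?mul1r // gt_eqF.
suff : d * (2 * Z) <= d * (d * X + d^-1 * Y) by rewrite ler_pM2l //; lra.
rewrite mulrDr [d * (d^-1 * Y)]mulrC dY; nra.
Qed.

(* The step length [1 / (|y|^2 + 1)] stands in for [1 / |y|^2], which may be
   undefined for a semi-inner product. *)
Lemma qf_step_le x y : T x -> T y ->
  qf (x - ((qf y + 1)^-1%:C * ip x y) *: y)
    <= qf x - (qf y + 1)^-1 * Re (conjc (ip x y) * ip x y).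
Proof.
move=> Tx Ty; set l := (qf y + 1)^-1; set c := ip x y.
rewrite (qfB Tx (memTZ _ Ty)) (qfZ _ Ty) (ipZr _ Ty Tx) -/c !Re_mulJ_scale.
rewrite mulrCA Re_mulCl.
have y0 := qf_ge0 Ty; have X0 : 0 <= Re (conjc c * c) by rewrite Re_mulJr addr_ge0 ?sqr_ge0.
have l0 : 0 < l by rewrite invr_gt0 ltr_wpDl.
have ly : l * qf y <= 1 by rewrite mulrC ler_pdivrMr ?ltr_wpDl // mul1r lerDl.
move: (Re (conjc c * c)) X0 => X X0.
suff : l * X * (l * qf y) <= l * X by nra.
by rewrite -[leRHS]mulr1 ler_wpM2l // mulr_ge0 // ltW.
Qed.

Lemma ip_eq0_of_min x y : T x -> T y ->
  (forall t, qf x <= qf (x - t *: y)) -> ip x y = 0.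
Proof.
move=> Tx Ty xmin; have [//|nz] := eqVneq (ip x y) 0; exfalso.
have := le_trans (xmin _) (qf_step_le Tx Ty).
have l0 : 0 < (qf y + 1)^-1 by rewrite invr_gt0 ltr_wpDl ?qf_ge0.
have := mulr_gt0 l0 (Re_mulJr_gt0 nz); lra.
Qed.

Lemma ip_eq0_of_small y c : T y ->
  (forall e, 0 < e -> exists a, [/\ T a, qf a < e & ip a y = c]) -> c = 0.
Proof.
move=> Ty small; have [//|nz] := eqVneq c 0; exfalso.
have l0 : 0 < (qf y + 1)^-1 by rewrite invr_gt0 ltr_wpDl ?qf_ge0.
have [a [Ta qa ac]] := small _ (mulr_gt0 l0 (Re_mulJr_gt0 nz)).
have := qf_step_le Ta Ty; rewrite ac.
have := qf_ge0 (memTB Ta (memTZ ((qf y + 1)^-1%:C * c) Ty)); lra.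
Qed.

Lemma orth_closed (Y : V -> Prop) : (forall y, Y y -> T y) ->
  closed_in (fun x => T x /\ forall y, Y y -> ip x y = 0).
Proof.
move=> YT x Tx approx; split=> // y Yy; have Ty := YT _ Yy.
apply: (ip_eq0_of_small Ty) => e /approx[s [Ts sY] qs].
exists (x - s); split=> //; first exact: (memTB Tx Ts).
by rewrite (ipBl Tx Ts Ty) sY // subr0.
Qed.

Lemma semi_ip_on_sub S : (forall x, S x -> T x) -> subspace S -> semi_ip_on S.
Proof.
case: P => _ lin herm pos ST Ssub; split=> // *; [apply: lin | apply: herm | apply: pos];
  exact: ST.
Qed.

Lemma qf_le_of_approx x r : T x -> 0 <= r ->
  (forall e, 0 < e -> exists y, [/\ T y, qf y <= r + e & qf (x - y) <= e ^+ 2]) ->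
  qf x <= r.
Proof.
move=> Tx r0 approx; apply/ler_addgt0Pr => eps eps0.
have r4 : 0 < r + 4 by rewrite ltr_wpDl.
set e := Num.min 1 (eps / (r + 4)).
have e0 : 0 < e by rewrite lt_min ltr01 divr_gt0.
have e1 : e <= 1 by rewrite ge_min lexx.
have er : e * (r + 4) <= eps by rewrite -ler_pdivlMr // ge_min lexx orbT.
have [y [Ty qy qxy]] := approx e e0.
have := qfD_le e0 Ty (memTB Tx Ty); rewrite addrC subrK.
have -> : (1 + e^-1) * qf (x - y) = qf (x - y) + qf (x - y) / e by rewrite mulrDl mul1r mulrC.
have : qf (x - y) / e <= e by rewrite ler_pdivrMr // -expr2.
have := qf_ge0 Ty; nra.
Qed.
End SemiInnerProduct.

Lemma eventually_inv_lt (R : realType) (e : R) : 0 < e ->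
  exists N, forall n, (N <= n)%N -> n.+1%:R^-1 < e.
Proof.
move=> e0; exists (Num.Def.archi_bound e^-1) => n Nn.
rewrite -[e]invrK ltf_pV2 ?posrE ?invr_gt0 ?ltr0Sn //.
apply: (lt_le_trans (archi_boundP _)); first by rewrite invr_ge0 ltW.
by rewrite ler_nat (leq_trans Nn).
Qed.

Section Projection.
Variables (R : realType) (V : lmodType R[i]) (ip : V -> V -> R[i]) (T : V -> Prop).
Hypotheses (P : semi_ip_on ip T) (cplT : complete_on ip T).
Variable S : V -> Prop.
Hypotheses (ST : forall x, S x -> T x) (Ssub : subspace S) (Scl : closed_in ip T S).
Let PS := semi_ip_on_sub P ST Ssub.
Local Notation qf := (qf ip).

Lemma min_dist_parallelogram u d s1 s2 : T u ->
  (forall s, S s -> d <= qf (u - s)) -> S s1 -> S s2 ->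
  qf (s1 - s2) <= 2 * (qf (u - s1) - d) + 2 * (qf (u - s2) - d).
Proof.
move=> Tu dmin S1 S2; have [T1 T2] := (ST S1, ST S2).
have := qf_parallelogram P (memTB P Tu T1) (memTB P Tu T2).
rewrite subrBB.
have -> : (u - s1) + (u - s2) = 2%:R *: (u - 2%:R^-1 *: (s1 + s2)).
  rewrite scalerBr scalerA mulfV ?pnatr_eq0 // scale1r scaler_nat mulr2n.
  by rewrite opprD addrACA.
have Smid : S (2%:R^-1 *: (s1 + s2)) by apply/(memTZ PS)/(memTD PS).
rewrite (qfZ P _ (memTB P Tu (ST Smid))) (qfBC P T2 T1).
have -> : Re (conjc 2%:R * 2%:R : R[i]) = 4 by rewrite /=; ring.
have := dmin _ Smid; lra.
Qed.

Lemma exists_minimizing_seq u : T u ->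
  exists d (s : nat -> V), [/\ 0 <= d, forall z, S z -> d <= qf (u - z),
    forall n, S (s n) & forall n, qf (u - s n) < d + n.+1%:R^-1].
Proof.
move=> Tu; pose E r := exists2 z, S z & r = qf (u - z).
have Elb : lbound E 0 by move=> _ [z Sz ->]; exact (qf_ge0 P (memTB P Tu (ST Sz))).
have Einf : has_inf E by split; [exists (qf (u - 0)), 0 => //; exact: memT0 PS | exists 0].
have /choice[s hs] n : exists z, S z /\ qf (u - z) < inf E + n.+1%:R^-1.
  have n0 : 0 < n.+1%:R^-1 :> R by rewrite invr_gt0.
  by have [_ [z Sz ->]] := inf_adherent n0 Einf; exists z.
exists (inf E), s; split=> [||n|n]; try exact: (hs n).1; try exact: (hs n).2.
- exact (lb_le_inf Einf.1 Elb).
- by move=> z Sz; apply (ge_inf Einf.2); exists z.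
Qed.

Lemma exists_min_dist u : T u ->
  exists2 w, S w & forall z, S z -> qf (u - w) <= qf (u - z).
Proof.
move=> Tu; have [d [s [d0 dmin Ss sd]]] := exists_minimizing_seq Tu.
have cauchy (e : R) : 0 < e -> exists N, forall n m, (N <= n)%N -> (N <= m)%N ->
    qf (s n - s m) < e.
  move=> e0; have [N hN] := eventually_inv_lt (divr_gt0 e0 (ltr0n R 4)).
  exists N => n m Nn Nm.
  have := min_dist_parallelogram Tu dmin (Ss n) (Ss m).
  have := sd n; have := sd m; have := hN _ Nn; have := hN _ Nm.
  move: n.+1%:R^-1 m.+1%:R^-1 => i j; lra.
have [w Tw sw] := cplT (fun n => ST (Ss n)) cauchy.
have Sw : S w.
  apply: (Scl Tw) => e e0; have [N hN] := sw e e0; exists (s N) => //.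
  by rewrite (qfBC P Tw (ST (Ss N))); apply: hN.
exists w => // z Sz; apply: (le_trans _ (dmin _ Sz)).
apply: (qf_le_of_approx P (memTB P Tu Tw) d0) => e e0.
have [N1 hN1] := eventually_inv_lt e0.
have [N2 hN2] := sw _ (exprn_gt0 2 e0).
exists (u - s (maxn N1 N2)); split.
- exact (memTB P Tu (ST (Ss _))).
- have := sd (maxn N1 N2); have := hN1 _ (leq_maxl N1 N2).
  by move: (maxn N1 N2).+1%:R^-1 => i; lra.
- by rewrite subrBB; apply/ltW/hN2/leq_maxr.
Qed.

Lemma orth_proj_exists u : T u -> exists w, is_orth_proj ip S u w.
Proof.
move=> Tu; have [w Sw wmin] := exists_min_dist Tu; exists w; split=> // z Sz.
apply: (ip_eq0_of_min P (memTB P Tu (ST Sw)) (ST Sz)) => t.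
by have := wmin _ (memTP PS t Sz Sw); rewrite opprD addrA addrAC.
Qed.

Hypothesis Tdef : definite_on ip T.

Lemma orth_proj_unique u w1 w2 : T u ->
  is_orth_proj ip S u w1 -> is_orth_proj ip S u w2 -> w1 = w2.
Proof.
move=> Tu [S1 o1] [S2 o2]; have S21 : S (w2 - w1) := memTB PS S2 S1.
apply/eqP; rewrite eq_sym -subr_eq0; apply/eqP/Tdef; first exact: (ST S21).
have TS1 := memTB P Tu (ST S1); have TS2 := memTB P Tu (ST S2).
by rewrite -{1}(subrBB u w1 w2) (ipBl P TS1 TS2 (ST S21)) o1 // o2 // subrr.
Qed.


Lemma mem_orth_orth x : T x ->
  (forall y, T y -> (forall s, S s -> ip y s = 0) -> ip x y = 0) -> S x.
Proof.
move=> Tx xperp; have [p [Sp op]] := orth_proj_exists Tx.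
have Tp := ST Sp; have Txp := memTB P Tx Tp.
have : ip (x - p) (x - p) = 0.
  by rewrite (ipBl P Tx Tp Txp) xperp // (ipC P Txp Tp) op // conjc0 subrr.
by move/(Tdef Txp)/eqP; rewrite subr_eq0 => /eqP ->.
Qed.
End Projection.

Section Riesz.
Variables (R : realType) (V : lmodType R[i]) (ip : V -> V -> R[i]) (T S : V -> Prop).
Hypotheses (P : semi_ip_on ip T) (cplT : complete_on ip T).
Hypothesis Tdef : definite_on ip T.
Hypotheses (ST : forall x, S x -> T x) (Ssub : subspace S).
Variable L : V -> R[i].
Hypothesis Llin : forall a x y, S x -> S y -> L (a *: x + y) = a * L x + L y.
Let PS := semi_ip_on_sub P ST Ssub.

Lemma linear_on0 : L 0 = 0.
Proof.
have := Llin 1 (memT0 PS) (memT0 PS); rewrite scale1r addr0 mul1r.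
by move/(congr1 (fun z => z - L 0)); rewrite addrK subrr.
Qed.

Lemma linear_onZ a x : S x -> L (a *: x) = a * L x.
Proof. by move=> Sx; rewrite -[_ *: _]addr0 Llin ?linear_on0 ?addr0 //; apply: memT0 PS. Qed.

Lemma linear_onB x y : S x -> S y -> L (x - y) = L x - L y.
Proof. by move=> Sx Sy; rewrite addrC -scaleN1r Llin // mulN1r addrC. Qed.

Lemma riesz_representation : closed_in ip T (fun x => S x /\ L x = 0) ->
  exists2 w, S w & forall u, S u -> L u = ip u w.
Proof.
move=> Ncl; pose N x := S x /\ L x = 0.
have Nsub : subspace N.
  split=> [|a x y [Sx Lx] [Sy Ly]]; first by split; [apply: memT0 PS | apply: linear_on0].
  by split; [apply: (memTP PS) | rewrite Llin // Lx Ly mulr0 addr0].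
have [[x0 Sx0 Lx0]|L0] := pselect (exists2 x0, S x0 & L x0 != 0); last first.
  exists 0 => [|u Su]; first exact: memT0 PS.
  rewrite (ip0r P (ST Su)); have [//|Lu] := eqVneq (L u) 0.
  by case: L0; exists u.
have NT x : N x -> T x by case=> /ST.
have [p [[Sp Lp] op]] := orth_proj_exists P cplT NT Nsub Ncl (ST Sx0).
set x1 := x0 - p; have Sx1 : S x1 := memTB PS Sx0 Sp; have Tx1 := ST Sx1.
have Lx1 : L x1 = L x0 by rewrite linear_onB // Lp subr0.
have g0 : ip x1 x1 != 0.
  by apply: contra Lx0 => /eqP/(Tdef Tx1) x1_0; rewrite -Lx1 x1_0 linear_on0.
exists (conjc (L x1 / ip x1 x1) *: x1) => [|u Su]; first exact: (memTZ PS _ Sx1).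
rewrite (ipZr P _ Tx1 (ST Su)) conjcK.
have Sy : S (L u *: x1 - L x1 *: u) := memTB PS (memTZ PS _ Sx1) (memTZ PS _ Su).
have Ny : N (L u *: x1 - L x1 *: u).
  split=> //; rewrite (linear_onB (memTZ PS _ Sx1) (memTZ PS _ Su)).
  by rewrite !linear_onZ // mulrC subrr.
have : ip (L u *: x1 - L x1 *: u) x1 = 0 by rewrite (ipC P Tx1 (ST Sy)) op // conjc0.
rewrite (ipBl P (memTZ P _ Tx1) (memTZ P _ (ST Su)) Tx1).
rewrite (ipZl P _ Tx1 Tx1) (ipZl P _ (ST Su) Tx1).
move/eqP; rewrite subr_eq0 => /eqP e.
by apply: (mulIf g0); rewrite e mulrAC divfK.
Qed.
End Riesz.

Section Adjoint.
Variables (R : realType) (V U : lmodType R[i]) (ip : V -> V -> R[i]) (ipU : U -> U -> R[i]).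
Variables (T S : V -> Prop) (f : V -> U) (c : R).
Hypotheses (P : semi_ip_on ip T) (cplT : complete_on ip T) (Tdef : definite_on ip T).
Hypotheses (ST : forall x, S x -> T x) (Ssub : subspace S) (Scl : closed_in ip T S).
Hypothesis PU : semi_ip_on ipU (fun=> True).
Hypothesis flin : forall a x y, S x -> S y -> f (a *: x + y) = a *: f x + f y.
Hypothesis fbound : forall x, S x -> qf ipU (f x) <= c * qf ip x.
Let PS := semi_ip_on_sub P ST Ssub.

Lemma exists_adjoint psi : exists2 w, S w & forall u, S u -> ipU (f u) psi = ip u w.
Proof.
pose L x := ipU (f x) psi.
have Llin a x y : S x -> S y -> L (a *: x + y) = a * L x + L y.
  by move=> Sx Sy; rewrite /L flin // (semi_ip_linear PU).
apply: (riesz_representation P cplT Tdef ST Ssub Llin) => x Tx approx.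
have Sx : S x by apply: (Scl Tx) => e /approx[s []]; exists s.
split=> //; apply: (ip_eq0_of_small PU (y := psi) I) => e e0.
have c0 : 0 < `|c| + 1 by rewrite ltr_pwDr ?normr_ge0.
have [s [Ss Ls] qs] := approx _ (divr_gt0 e0 c0).
exists (f (x - s)); split=> //.
- have := fbound (memTB PS Sx Ss); have := qf_ge0 P (ST (memTB PS Sx Ss)).
  have := ler_norm c; have : e / (`|c| + 1) * (`|c| + 1) = e by rewrite divfK ?gt_eqF.
  by move: qs; nra.
- by rewrite -/(L (x - s)) (linear_onB Llin Sx Ss) Ls subr0.
Qed.
End Adjoint.

Lemma sqrtr_lt (R : realType) (x e : R) : 0 < e -> (Num.sqrt x < e) = (x < e ^+ 2).
Proof. by move=> e0; rewrite -{1}(ger0_norm (ltW e0)) -sqrtr_sqr ltr_sqrt ?exprn_gt0. Qed.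

Section HilbertSpace.
Variables (R : realType) (V : lmodType R[i]) (ip : V -> V -> R[i]).
Hypothesis hV : hilbert_ip ip.

Lemma hilbert_semi_ip : semi_ip_on ip (fun=> True).
Proof. by case: hV => lin herm pos _ _; split=> //; split. Qed.

Lemma hilbert_qf_ge0 x : 0 <= qf ip x.
Proof. exact: (qf_ge0 hilbert_semi_ip (x := x)). Qed.

Lemma hilbert_complete : complete_on ip (fun=> True).
Proof.
case: hV => _ _ _ _ cpl u _ cauchy.
have [l hl] : exists l, forall e, 0 < e -> exists N, forall n, (N <= n)%N ->
    ipnorm ip (u n - l) < e.
  apply: cpl => e e0; have [N hN] := cauchy _ (exprn_gt0 2 e0).
  by exists N => n m Nn Nm; rewrite /ipnorm sqrtr_lt //; apply: hN.
exists l => // e e0; have [N hN] := hl (Num.sqrt e) ltac:(by rewrite sqrtr_gt0).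
by exists N => n Nn; have := hN n Nn; rewrite /ipnorm ltr_sqrt.
Qed.
End HilbertSpace.

Section ProductSpace.
Variables (R : realType) (V W : lmodType R[i]).
Variables (ipV : V -> V -> R[i]) (ipW : W -> W -> R[i]).
Hypotheses (hV : hilbert_ip ipV) (hW : hilbert_ip ipW).

Definition prod_ip (p q : V * W) : R[i] := ipV p.1 q.1 + ipW p.2 q.2.

Lemma prod_semi_ip : semi_ip_on prod_ip (fun=> True).
Proof.
case: hV => linV hermV posV _ _; case: hW => linW hermW posW _ _.
split=> //.
- by move=> a x y z _ _ _; rewrite /prod_ip /= linV linW mulrDr addrACA.
- by move=> x y _ _; rewrite /prod_ip conjcD hermV hermW.
- by move=> x _; rewrite addr_ge0.
Qed.

Lemma prod_definite : definite_on prod_ip (fun=> True).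
Proof.
case: hV => _ _ posV defV _; case: hW => _ _ posW defW _.
by move=> [x y] _ /eqP; rewrite paddr_eq0 //= => /andP[/eqP/defV -> /eqP/defW ->].
Qed.

Lemma qf_prod p : qf prod_ip p = qf ipV p.1 + qf ipW p.2.
Proof. exact: raddfD. Qed.

Lemma qf_prod_fst p : qf ipV p.1 <= qf prod_ip p.
Proof. by rewrite qf_prod lerDl hilbert_qf_ge0. Qed.

Lemma qf_prod_snd p : qf ipW p.2 <= qf prod_ip p.
Proof. by rewrite qf_prod lerDr hilbert_qf_ge0. Qed.

Lemma prod_complete : complete_on prod_ip (fun=> True).
Proof.
move=> u _ cauchy.
have [x _ ux] : exists2 x, True & forall e, 0 < e -> exists N, forall n, (N <= n)%N ->
    qf ipV ((u n).1 - x) < e.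
  apply: (hilbert_complete hV) => // e /cauchy[N hN]; exists N => n m Nn Nm.
  exact: (le_lt_trans (qf_prod_fst _) (hN n m Nn Nm)).
have [y _ uy] : exists2 y, True & forall e, 0 < e -> exists N, forall n, (N <= n)%N ->
    qf ipW ((u n).2 - y) < e.
  apply: (hilbert_complete hW) => // e /cauchy[N hN]; exists N => n m Nn Nm.
  exact: (le_lt_trans (qf_prod_snd _) (hN n m Nn Nm)).
exists (x, y) => // e e0; have e20 : 0 < e / 2 by rewrite divr_gt0.
have [[N1 hN1] [N2 hN2]] := (ux _ e20, uy _ e20).
exists (maxn N1 N2) => n Nn; rewrite qf_prod /=.
have := hN1 n (leq_trans (leq_maxl _ _) Nn); have := hN2 n (leq_trans (leq_maxr _ _) Nn).
lra.
Qed.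
End ProductSpace.

Section Graph.
Variables (R : realType) (V W : lmodType R[i]).
Variables (ipV : V -> V -> R[i]) (ipW : W -> W -> R[i]).
Hypotheses (hV : hilbert_ip ipV) (hW : hilbert_ip ipW).
Variable A : op V W.
Hypothesis hA : dd_closed ipV ipW A.
Local Notation gip := (graph_ip ipV ipW A).
Local Notation pip := (prod_ip ipV ipW).
Let PV := hilbert_semi_ip hV.
Let PW := hilbert_semi_ip hW.

Definition graph_of (p : V * W) : Prop := dom A p.1 /\ p.2 = app A p.1.

Lemma dom_subspace : subspace (dom A). Proof. by case: hA. Qed.

Lemma appP a x y : dom A x -> dom A y -> app A (a *: x + y) = a *: app A x + app A y.
Proof. by case: hA => _ lin _ _; apply: lin. Qed.

Lemma app0 : app A 0 = 0.
Proof.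
have [d0 _] := dom_subspace; have := appP 1 d0 d0.
by rewrite !scale1r addr0 => /(congr1 (fun w => w - app A 0)); rewrite addrK subrr.
Qed.

Lemma graph_semi_ip : semi_ip_on gip (dom A).
Proof.
case: hV => linV hermV posV _ _; case: hW => linW hermW posW _ _.
split; first exact: dom_subspace.
- by move=> a x y z dx dy _; rewrite /graph_ip appP // linV linW mulrDr addrACA.
- by move=> x y _ _; rewrite /graph_ip conjcD hermV hermW.
- by move=> x _; rewrite addr_ge0.
Qed.

Lemma appB x y : dom A x -> dom A y -> app A (x - y) = app A x - app A y.
Proof. by move=> dx dy; rewrite addrC -scaleN1r appP // scaleN1r addrC. Qed.

Lemma graph_definite : definite_on gip (dom A).
Proof.
case: hV => _ _ posV defV _; case: hW => _ _ posW _ _.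
by move=> x _ /eqP; rewrite paddr_eq0 // => /andP[/eqP/defV].
Qed.

Lemma qf_graph x : qf gip x = qf pip (x, app A x).
Proof. by []. Qed.

Lemma graph_subspace : subspace graph_of.
Proof.
split=> [|a [x1 x2] [y1 y2] [/= dx ->] [/= dy ->]].
  by split; [apply: (memT0 graph_semi_ip) | rewrite app0].
by split=> /=; [apply: (memTP graph_semi_ip) | rewrite appP].
Qed.

Lemma graph_closed : closed_in pip (fun=> True) graph_of.
Proof.
move=> [x y] _ approx; suff [dx <-] : dom A x /\ app A x = y by [].
case: hA => _ _ _; apply=> e e0.
have e20 : 0 < (e / 2) ^+ 2 by rewrite exprn_gt0 // divr_gt0.
have [[z _] [/= dz ->] hz] := approx _ e20; exists z; split=> //.
have : ipnorm ipV (x - z) < e / 2.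
  by rewrite /ipnorm sqrtr_lt ?divr_gt0 //; exact (le_lt_trans (qf_prod_fst ipV hW _) hz).
have : ipnorm ipW (y - app A z) < e / 2.
  by rewrite /ipnorm sqrtr_lt ?divr_gt0 //; exact (le_lt_trans (qf_prod_snd ipW hV _) hz).
lra.
Qed.

Lemma graph_complete : complete_on gip (dom A).
Proof.
move=> u du cauchy; pose v n := (u n, app A (u n)).
have qf_v n x : dom A x -> qf gip (u n - x) = qf pip (v n - (x, app A x)).
  by move=> dx; rewrite qf_graph appB.
have [[x y] _ lim] : exists2 l, True & forall e, 0 < e -> exists N, forall n,
    (N <= n)%N -> qf pip (v n - l) < e.
  apply: (prod_complete hV hW) => // e /cauchy[N hN]; exists N => n m Nn Nm.
  by have := hN n m Nn Nm; rewrite (qf_v _ _ (du m)).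
have [/= dx ex] : graph_of (x, y).
  apply: graph_closed => // e /lim[N hN]; exists (v N); first exact: (conj (du N) erefl).
  by rewrite (qfBC (prod_semi_ip hV hW)) //; apply: hN.
by exists x => // e /lim[N hN]; exists N => n Nn; rewrite qf_v // -ex; apply: hN.
Qed.

Lemma adj_graph_sym x p : adj_graph ipV ipW A x p <->
  forall v, dom A v -> ipV p v = ipW x (app A v).
Proof.
split=> adj v dv; first by rewrite (ipC PV I I) -adj // -(ipC PW I I).
by rewrite (ipC PV I I) adj // -(ipC PW I I).
Qed.

(* [A^** = A]: the closed graph of [A] is its own double orthogonal complement. *)
Lemma adj_adj y z :
  (forall x p, adj_graph ipV ipW A x p -> ipV p y = ipW x z) ->
  dom A y /\ app A y = z.
Proof.
move=> adjH; suff [/= dy ->] : graph_of (y, z) by [].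
apply: (mem_orth_orth (prod_semi_ip hV hW) (prod_complete hV hW) (fun _ _ => I)
  graph_subspace graph_closed (prod_definite hV hW) I) => -[r1 r2] _ rperp.
have adj : adj_graph ipV ipW A r2 (- r1).
  apply/adj_graph_sym => v dv; rewrite (ipNl PV I I); apply/eqP.
  by rewrite eq_sym -addr_eq0 addrC; apply/eqP/(rperp (v, app A v)).
have := adjH _ _ adj; rewrite (ipNl PV I I) => e.
by rewrite /prod_ip /= (ipC PV I I) (ipC PW I I) -conjcD -e subrr conjc0.
Qed.

Lemma neg_adj_sub_sym (B : op W V) : neg_adj_sub ipV ipW A B -> neg_adj_sub ipW ipV B A.
Proof.
move=> hAB y z adj; apply: adj_adj => x p adjA; have [dx Bx] := hAB _ _ adjA.
by have := adj x dx; rewrite Bx (ipNl PV I I) (ipNr PW I I) => <-; rewrite opprK.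
Qed.
End Graph.

Lemma orth_projP (R : realType) (V : lmodType R[i]) (ip : V -> V -> R[i]) S u :
  (exists w, is_orth_proj ip S u w) -> is_orth_proj ip S u (orth_proj ip S u).
Proof. exact: epsilon_spec. Qed.

Section BoundarySpace.
Variables (R : realType) (V W : lmodType R[i]).
Variables (ipV : V -> V -> R[i]) (ipW : W -> W -> R[i]).
Hypotheses (hV : hilbert_ip ipV) (hW : hilbert_ip ipW).
Variables (A : op V W) (B : op W V).
Hypotheses (hA : dd_closed ipV ipW A) (hB : dd_closed ipW ipV B).
Hypothesis hAB : neg_adj_sub ipW ipV B A.
Let PV := hilbert_semi_ip hV.
Let PW := hilbert_semi_ip hW.
Let PA := graph_semi_ip hV hW hA.
Local Notation gA := (graph_ip ipV ipW A).
(* [domA0] is the domain of [A0 := - B^*], the paper's ring operator. *)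
Local Notation domA0 := (dom_neg_adj ipW ipV B).
Local Notation BDA := (BD ipV ipW A domA0).
Local Notation projBD := (orth_proj gA BDA).

Lemma dom_neg_adj_dom y : domA0 y -> dom A y.
Proof. by case=> z /hAB[]. Qed.

Lemma BD_dom u : BDA u -> dom A u.
Proof. by case. Qed.

Lemma BD_subspace : subspace BDA.
Proof.
split=> [|a x y [dx ox] [dy oy]].
  by split=> [|z /dom_neg_adj_dom dz]; [apply: (memT0 PA) | rewrite (ip0l PA)].
split=> [|z Sz]; first exact: (memTP PA).
by rewrite (semi_ip_linear PA) ?ox ?oy ?mulr0 ?addr0 //; apply: dom_neg_adj_dom.
Qed.

Lemma BD_closed : closed_in gA (dom A) BDA.
Proof. exact: (orth_closed PA dom_neg_adj_dom). Qed.

Lemma projBD_spec u : dom A u -> is_orth_proj gA BDA u (projBD u).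
Proof.
move=> du; apply/orth_projP.
exact: (orth_proj_exists PA (graph_complete hV hW hA) BD_dom BD_subspace BD_closed du).
Qed.

Lemma projBD_mem u : dom A u -> BDA (projBD u).
Proof. by case/projBD_spec. Qed.

Lemma projBD_eq u w : dom A u -> is_orth_proj gA BDA u w -> projBD u = w.
Proof.
move=> du; apply: (orth_proj_unique PA BD_dom BD_subspace (graph_definite hV hW (A:=A)) du).
exact: projBD_spec.
Qed.

Lemma projBD_id u : BDA u -> projBD u = u.
Proof.
move=> bu; apply: (projBD_eq (BD_dom bu)); split=> // z bz.
by rewrite subrr (ip0l PA (BD_dom bz)).
Qed.

Lemma projBD_dom_neg_adj y : domA0 y -> projBD y = 0.
Proof.
move=> Sy; have dy := dom_neg_adj_dom Sy; apply: (projBD_eq dy).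
split=> [|z [dz oz]]; first exact: (memT0 (semi_ip_on_sub PA BD_dom BD_subspace)).
by rewrite subr0 (ipC PA dz dy) oz // conjc0.
Qed.

Lemma dom_neg_adj_subspace : subspace domA0.
Proof.
split=> [|a x y [zx hx] [zy hy]]; first by exists 0 => v _; rewrite !(ip0r PV I, ip0r PW I).
exists (a *: zx + zy) => v dv.
by rewrite (ipDr PV I I I) (ipZr PV _ I I) (ipDr PW I I I) (ipZr PW _ I I) hx // hy.
Qed.

Lemma green_dom_neg_adj s v : domA0 s -> dom B v ->
  ipV s (app B v) + ipW (app A s) v = 0.
Proof.
case=> z adj dv; have [_ ->] := hAB adj.
by rewrite (ipC PV I I) adj // (ipNl PW I I) -(ipC PW I I) subrr.
Qed.

Lemma green_dom_neg_adjC s v : domA0 s -> dom B v ->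
  ipV (app B v) s + ipW v (app A s) = 0.
Proof.
move=> Ss dv; rewrite (ipC PV I I) (ipC PW I I) -conjcD.
by rewrite (green_dom_neg_adj Ss dv) conjc0.
Qed.

Lemma dom_neg_adj_closed : closed_in gA (dom A) domA0.
Proof.
move=> x dx approx; exists (- app A x) => v dv.
have c0 : ipV x (app B v) + ipW (app A x) v = 0.
  apply: (ip_eq0_of_small (prod_semi_ip hV hW) (y := (app B v, v)) I).
  move=> e /approx[s Ss qs]; have ds := dom_neg_adj_dom Ss.
  exists (x - s, app A (x - s)); split=> //.
  rewrite /prod_ip /= (appB hA dx ds) (ipBl PV I I I) (ipBl PW I I I).
  by rewrite addrACA -opprD (green_dom_neg_adj Ss dv) subr0.
rewrite (ipC PV I I) (ipNr PW I I).
have -> : ipV x (app B v) = - ipW (app A x) v by apply/eqP; rewrite -addr_eq0 c0.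
by rewrite conjcN -(ipC PW I I).
Qed.

Lemma projBD_residual u : dom A u -> domA0 (u - projBD u).
Proof.
move=> du; have [bp op] := projBD_spec du.
apply: (mem_orth_orth PA (graph_complete hV hW hA) dom_neg_adj_dom dom_neg_adj_subspace
  dom_neg_adj_closed (graph_definite hV hW (A:=A)) (memTB PA du (BD_dom bp))).
by move=> y dy oy; apply: op; split.
Qed.

Lemma BD_app u : BDA u -> dom B (app A u) /\ app B (app A u) = u.
Proof.
move=> [du ou]; apply: (adj_adj hW hV hB) => x p adj; have [dx Ax] := hAB adj.
have := ou x (ex_intro _ p adj); rewrite /graph_ip Ax (ipNr PW I I).
by move/eqP; rewrite subr_eq0 => /eqP e; rewrite (ipC PW I I) -e -(ipC PV I I).
Qed.

Lemma BD_of_app u : dom A u -> dom B (app A u) -> app B (app A u) = u -> BDA u.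
Proof.
move=> du dAu BAu; split=> // y [z adj]; have [_ Ay] := hAB adj.
by rewrite /graph_ip Ay (ipNr PW I I) -{1}BAu (adj _ dAu) subrr.
Qed.

Lemma BD_graph_ip_app x y : BDA x -> BDA y ->
  graph_ip ipW ipV B (app A x) (app A y) = gA x y.
Proof.
by move=> Bx By; rewrite /graph_ip (BD_app Bx).2 (BD_app By).2 addrC.
Qed.

(* [B = (- A0)^*]: the hypothesis puts [(f, g)] in the graph of this adjoint. *)
Lemma app_of_weak f g : (forall v, domA0 v -> ipW f (app A v) + ipV g v = 0) ->
  dom B f /\ app B f = g.
Proof.
move=> weak; apply: (adj_adj hW hV hB) => x p adj; have [_ Ax] := hAB adj.
have := weak x (ex_intro _ p adj); rewrite Ax (ipNr PW I I) addrC.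
move/eqP; rewrite subr_eq0 => /eqP e.
by rewrite (ipC PW I I) -e -(ipC PV I I).
Qed.
End BoundarySpace.

Lemma sqrtr_le_scale (R : realType) (a b c : R) : 0 <= a -> 0 <= b ->
  Num.sqrt a <= c * Num.sqrt b -> a <= c ^+ 2 * b.
Proof.
move=> a0 b0 h; rewrite -(sqr_sqrtr a0) -(sqr_sqrtr b0) -exprMn.
by rewrite ler_pXn2r ?nnegrE ?sqrtr_ge0 // (le_trans _ h) ?sqrtr_ge0.
Qed.

Section DirichletToNeumann.
Variables (R : realType) (H0 H1 H : lmodType R[i]).
Variables (ip0 : H0 -> H0 -> R[i]) (ip1 : H1 -> H1 -> R[i]) (ipH : H -> H -> R[i]).
Hypotheses (hip0 : hilbert_ip ip0) (hip1 : hilbert_ip ip1) (hipH : hilbert_ip ipH).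
Variables (G : op H0 H1) (D : op H1 H0).
Hypotheses (hG : dd_closed ip0 ip1 G) (hD : dd_closed ip1 ip0 D).
Hypothesis hGD : neg_adj_sub ip0 ip1 G D.
Variable kappa : H0 -> H.
Hypothesis hk : bounded_on_BDG ip0 ip1 ipH G D kappa.

Let hDG := neg_adj_sub_sym hip0 hip1 hG hGD.
Let P0 := hilbert_semi_ip hip0.
Let P1 := hilbert_semi_ip hip1.
Let PH := hilbert_semi_ip hipH.
Let PG := graph_semi_ip hip0 hip1 hG.
Local Notation gG := (graph_ip ip0 ip1 G).
Local Notation gD := (graph_ip ip1 ip0 D).
Local Notation BDG := (BDG ip0 ip1 G D).
Local Notation BDD := (BDD ip0 ip1 G D).
Local Notation projG := (projG ip0 ip1 G D).
Local Notation projD := (projD ip0 ip1 G D).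
Local Notation kappa_adj := (kappa_adj ip0 ip1 ipH G D kappa).

Let BDG_dom u : BDG u -> dom G u := fun Bu => Bu.1.
Let BDG_subspace := BD_subspace hip0 hip1 hG hDG.

Lemma kappa_lin c x y : BDG x -> BDG y -> kappa (c *: x + y) = c *: kappa x + kappa y.
Proof. by case: hk => lin _; apply: lin. Qed.

Lemma kappa0 : kappa 0 = 0.
Proof.
have B0 : BDG 0 := BDG_subspace.1.
have := kappa_lin 1 B0 B0; rewrite !scale1r addr0.
by move/(congr1 (fun h => h - kappa 0)); rewrite addrK subrr.
Qed.

Lemma kappa_bound : exists c, forall x, BDG x -> qf ipH (kappa x) <= c * qf gG x.
Proof.
case: hk => _ [c hc]; exists (c ^+ 2) => x Bx.
exact: (sqrtr_le_scale (hilbert_qf_ge0 hipH _) (qf_ge0 PG (BDG_dom Bx)) (hc x Bx)).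
Qed.

Lemma kappa_adjP psi :
  BDG (kappa_adj psi) /\ forall u, BDG u -> ipH (kappa u) psi = gG u (kappa_adj psi).
Proof.
have [c kb] := kappa_bound.
have [w Bw wP] := exists_adjoint PG (graph_complete hip0 hip1 hG)
  (graph_definite hip0 hip1 (A:=G)) BDG_dom BDG_subspace (BD_closed hip0 hip1 hG hDG)
  PH kappa_lin kb psi.
apply: (epsilon_spec _ (fun w => BDG w /\ forall u, BDG u -> ipH (kappa u) psi = gG u w)).
by exists w.
Qed.

Let projG_BD v (dv : dom G v) : BDG (projG v) := projBD_mem hip0 hip1 hG hDG dv.
Let projD_BD f (df : dom D f) : BDD (projD f) := projBD_mem hip1 hip0 hD hGD df.
Let projG_id u (Bu : BDG u) : projG u = u := projBD_id hip0 hip1 hG hDG Bu.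
Let projG_dom_neg_adj v (v0 : dom_neg_adj ip1 ip0 D v) : projG v = 0 :=
  projBD_dom_neg_adj hip0 hip1 hG hDG v0.
Let BDG_app u (Bu : BDG u) : dom D (app G u) /\ app D (app G u) = u :=
  BD_app hip0 hip1 hD hDG Bu.
Let BDD_app f (Bf : BDD f) : dom G (app D f) /\ app G (app D f) = f :=
  BD_app hip1 hip0 hG hGD Bf.

Lemma app_G_BDD u : BDG u -> BDD (app G u).
Proof.
move=> Bu; have [dGu DGu] := BDG_app Bu.
by apply: (BD_of_app hip0 hGD dGu); rewrite DGu //; apply: BDG_dom.
Qed.

Lemma app_D_BDG f : BDD f -> BDG (app D f).
Proof.
move=> Bf; have [dDf GDf] := BDD_app Bf.
by apply: (BD_of_app hip1 hDG dDf); rewrite GDf //; case: Bf.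
Qed.

(* Green's formula: only the boundary parts of [f] and [v] contribute. *)
Lemma green_formula f v : dom D f -> dom G v ->
  ip1 f (app G v) + ip0 (app D f) v = gD (projD f) (app G (projG v)).
Proof.
move=> df dv; have [Bf Bv] := (projD_BD df, projG_BD dv).
have [dpf dpv] : dom D (projD f) /\ dom G (projG v) by split; [case: Bf | case: Bv].
have E1 := green_dom_neg_adj hip1 hip0 hGD (projBD_residual hip1 hip0 hD hGD df) dv.
have E2 := green_dom_neg_adjC hip0 hip1 hDG (projBD_residual hip0 hip1 hG hDG dv) dpf.
rewrite (appB hD df dpf) (ipBl P1 I I I) (ipBl P0 I I I) in E1.
rewrite (appB hG dv dpv) (ipBr P1 I I I) (ipBr P0 I I I) in E2.
rewrite /graph_ip (BDG_app Bv).2; apply/eqP; rewrite -subr_eq0; apply/eqP.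
rewrite -[RHS](addr0 0) -{1}E1 -E2; ring.
Qed.

Lemma ip_kappa_projG psi v : dom G v ->
  ipH psi (kappa (projG v)) = gD (app G (kappa_adj psi)) (app G (projG v)).
Proof.
move=> dv; have [Bw wP] := kappa_adjP psi; have Bv := projG_BD dv.
rewrite (ipC PH I I) wP // -(ipC PG (BDG_dom Bv) (BDG_dom Bw)).
by rewrite (BD_graph_ip_app hip0 hip1 hD hDG Bw Bv).
Qed.

Lemma BDD_eq f1 f2 : BDD f1 -> BDD f2 ->
  (forall v, dom G v -> gD f1 (app G (projG v)) = gD f2 (app G (projG v))) -> f1 = f2.
Proof.
move=> B1 B2 eq12; have PD := graph_semi_ip hip1 hip0 hD.
have BDD_dom f : BDD f -> dom D f by case.
have PBD := semi_ip_on_sub PD BDD_dom (BD_subspace hip1 hip0 hD hGD).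
have Bd : BDD (f1 - f2) := memTB PBD B1 B2.
have [dDd GDd] := BDD_app Bd.
have := eq12 _ dDd; rewrite (projG_id (app_D_BDG Bd)) GDd => e.
have : gD (f1 - f2) (f1 - f2) = 0 by rewrite {1}(ipBl PD B1.1 B2.1 Bd.1) e subrr.
by move/(graph_definite hip1 hip0 (A:=D) Bd.1)/eqP; rewrite subr_eq0 => /eqP.
Qed.

Definition weak_DtN_graph (a : H1 -> H1) (m : H0 -> H0) (phi psi : H) :=
  exists u, [/\ dom G u, kappa (projG u) = phi &
    forall v, dom G v ->
      ip1 (a (app G u)) (app G v) + ip0 (m u) v = ipH psi (kappa (projG v))].

Lemma DtN_graph_H_weak a m phi psi :
  DtN_graph_H ip0 ip1 ipH G D a m kappa phi psi -> weak_DtN_graph a m phi psi.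
Proof.
move=> [_ [_ <- [u [du daGu /subr0_eq mu <- paGu]]]]; exists u; split=> // v dv.
by rewrite mu green_formula // paGu ip_kappa_projG.
Qed.

Lemma weak_DtN_graph_H a m phi psi :
  weak_DtN_graph a m phi psi -> DtN_graph_H ip0 ip1 ipH G D a m kappa phi psi.
Proof.
move=> [u [du <- weak]].
have [daGu DaGu] : dom D (a (app G u)) /\ app D (a (app G u)) = m u.
  apply: (app_of_weak hip0 hip1 hD hDG) => v v0.
  rewrite weak ?(projG_dom_neg_adj v0) ?kappa0 ?(ip0r PH I) //.
  exact: (dom_neg_adj_dom hDG v0).
exists (projG u); split=> //; first exact: projG_BD.
exists u; split=> //; first by rewrite DaGu subrr.
apply: BDD_eq => [||v dv]; first exact: projD_BD.
  by apply: app_G_BDD; case: (kappa_adjP psi).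
by rewrite -green_formula // DaGu weak // ip_kappa_projG.
Qed.
End DirichletToNeumann.

Unset Implicit Arguments.
Local Close Scope complex_scope.

Theorem proposition5p10 (R : realType) (H0 H1 H : lmodType R[i])
  (ip0 : H0 -> H0 -> R[i]) (ip1 : H1 -> H1 -> R[i]) (ipH : H -> H -> R[i])
  (hip0 : hilbert_ip ip0) (hip1 : hilbert_ip ip1) (hipH : hilbert_ip ipH)
  (G : op H0 H1) (D : op H1 H0)
  (hG : dd_closed ip0 ip1 G) (hD : dd_closed ip1 ip0 D)
  (hGD : neg_adj_sub ip0 ip1 G D)
  (m : {linear H0 -> H0}) (hm : bounded_op ip0 m)
  (a : {linear H1 -> H1}) (ha : bounded_op ip1 a) (hac : coercive ip1 a)
  (kappa : H0 -> H) (hk : bounded_on_BDG ip0 ip1 ipH G D kappa)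
  (hkinj : forall x y, BDG ip0 ip1 G D x -> BDG ip0 ip1 G D y -> kappa x = kappa y -> x = y)
  (hkdense : dense ipH (fun h => exists x, BDG ip0 ip1 G D x /\ kappa x = h)) :
  let j := fun u : H0 => kappa (projG ip0 ip1 G D u) in
  let b := fun u v : H0 => ip1 (a (app G u)) (app G v) + ip0 (m u) v in
  forall phi psi : H,
    DtN_graph_H ip0 ip1 ipH G D a m kappa phi psi <->
    exists u : H0, [/\ dom G u, j u = phi &
                       forall v : H0, dom G v -> b u v = ipH psi (j v)].
Proof.
move=> j b phi psi; split.
- exact: (DtN_graph_H_weak hip0 hip1 hipH hG hD hGD hk).
- exact: (weak_DtN_graph_H hip0 hip1 hipH hG hD hGD hk).
Qed.
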